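(* Consider the balls-to-bins problem with a fixed family of bijections $f_{p,q}$. Fix a contiguous interval $U$ of the operation sequence (the node $u$), partitioned into consecutive sub-intervals called segments. Let $\mathcal I_1,\mathcal I_2$ be two sequences of insertions during $U$ (preceded by the same fixed operations) that both start at state $(p_{st},q_{st})$ and both end at state $(p_{end},q_{end})$, with $p_{end}-p_{st}=q_{end}-q_{st}$. Let $\mathrm{dist}(\mathcal I_1,\mathcal I_2)$ be the number of balls among $a_{p_{st}+1},\dots,a_{p_{end}},b_{q_{st}+1},\dots,b_{q_{end}}$ that are inserted in different segments under $\mathcal I_1$ and under $\mathcal I_2$. Then $\mathrm{cost}_u(\mathcal I_1)+\mathrm{cost}_u(\mathcal I_2)\ge \tfrac12\,\mathrm{dist}(\mathcal I_1,\mathcal I_2)$.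
   Context: Balls-to-bins problem: the state is $(p,q)$; there are balls $a_1,\dots,a_p,b_1,\dots,b_q$ and bins $1,\dots,p+q$, and the placement is a bijection $f_{p,q}$ from balls to bins depending only on $(p,q)$. An insertion increments $p$ (creating ball $a_{p+1}$) or $q$ (creating ball $b_{q+1}$), together with a new bin, and the placement switches from $f_{p,q}$ to the new bijection. A ball is moved at operation $t$ if it is created at $t$ or its bin changes at $t$. For a sequence $\mathcal I$ and the interval $U$ with segments, $\mathrm{cost}_u(\mathcal I)$ is the number of pairs $(x,t_2)$ such that ball $x$ is moved at operation $t_2$, the previous operation $t_1<t_2$ at which $x$ was moved exists, and $t_1,t_2$ both lie in $U$ but in different segments. *)

From mathcomp Require Import all_boot.
Set Implicit Arguments. Unset Strict Implicit. Unset Printing Implicit Defensive.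

(* Balls: [inl i] is a_i, [inr j] is b_j (indices start at 1). Bins are nats. *)
Definition ball := (nat + nat)%type.

Definition ball_in (s : nat * nat) (x : ball) : bool :=
  match x with inl i => (0 < i <= s.1) | inr j => (0 < j <= s.2) end.

(* f p q x : bin of ball x under the placement f_{p,q}. *)
Definition placement := nat -> nat -> ball -> nat.

Definition bijective_family (f : placement) : Prop :=
  forall p q,
    (forall x y, ball_in (p, q) x -> ball_in (p, q) y -> f p q x = f p q y -> x = y)
 /\ (forall x, ball_in (p, q) x -> 0 < f p q x <= p + q)
 /\ (forall b, 0 < b <= p + q -> exists2 x, ball_in (p, q) x & f p q x = b).

(* An operation sequence: [true] inserts a new a-ball (p+1), [false] a new b-ball.
   Operations are numbered 0,1,2,...; the state starts at (0,0), and
   [state ops t] is the state before operation t (after the first t operations). *)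
Definition state (ops : seq bool) (t : nat) : nat * nat :=
  (count id (take t ops), count negb (take t ops)).

Definition moved (f : placement) (ops : seq bool) (x : ball) (t : nat) : bool :=
  let s := state ops t in let s' := state ops t.+1 in
  (ball_in s' x && ~~ ball_in s x) || (ball_in s x && (f s.1 s.2 x != f s'.1 s'.2 x)).

Definition all_balls (s : nat * nat) : seq ball :=
  [seq inl i | i <- iota 1 s.1] ++ [seq inr j | j <- iota 1 s.2].

(* U = operations lo, ..., hi-1; seg t = label of the segment containing t.
   (x,t2) is counted iff x is moved at t2 in U, the previous move t1 < t2 of x
   exists, lies in U (lo <= t1), and seg t1 <> seg t2. *)
Definition counted (f : placement) (seg : nat -> nat) (lo : nat)
    (ops : seq bool) (x : ball) (t2 : nat) : bool :=
  moved f ops x t2 &&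
  has (fun t1 => [&& moved f ops x t1, seg t1 != seg t2 &
                     all (fun t => ~~ moved f ops x t) (iota t1.+1 (t2 - t1.+1))])
      (iota lo (t2 - lo)).

Definition cost_u (f : placement) (seg : nat -> nat) (lo hi : nat) (ops : seq bool) : nat :=
  \sum_(lo <= t2 < hi) count (fun x => counted f seg lo ops x t2) (all_balls (state ops hi)).

Definition ctime (ops : seq bool) (x : ball) : nat :=
  find (fun t => ball_in (state ops t.+1) x) (iota 0 (size ops)).

Definition new_balls (pst qst pend qend : nat) : seq ball :=
  [seq inl i | i <- iota pst.+1 (pend - pst)] ++ [seq inr j | j <- iota qst.+1 (qend - qst)].

Definition dist (seg : nat -> nat) (ops1 ops2 : seq bool) (pst qst pend qend : nat) : nat :=
  count (fun x => seg (ctime ops1 x) != seg (ctime ops2 x)) (new_balls pst qst pend qend).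

From mathcomp Require Import all_boot.
From mathcomp Require Import zify.
Set Implicit Arguments. Unset Strict Implicit. Unset Printing Implicit Defensive.

(* Fix a ball x inserted in an earlier segment under I1 than under I2, and cut U
   at a segment boundary T between its two insertion times, so that x exists at
   time T under I1 but not under I2.  Starting from c_0 = x, let c_(j+1) be the
   ball that occupies, under I2 at time T, the final bin of c_j.  As long as no
   counted pair shows up, every c_j is moved before T but not after T under I1
   (so its bin at T is its final bin), while c_(j+1) already existed at the start
   of U, was not moved before T under I2, and starts in the final bin of c_j.
   The final placement is injective, so the c_j are distinct and the chain must
   break; it breaks at a ball whose last move before T and first move after T
   form a counted pair under I1 or I2.  From that pair one recovers x by walking
   the chain backwards through the initial and final placements, so charging x
   to the pair is injective.  Doing this in both directions costs the factor 2. *)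

Lemma count_id_negb (s : seq bool) : count id s + count negb s = size s.
Proof. exact: count_predC. Qed.

Lemma count_neq_le_lt (T : Type) (F G : T -> nat) (s : seq T) :
  count (fun x => F x != G x) s
  <= count (fun x => F x < G x) s + count (fun x => G x < F x) s.
Proof.
rewrite -count_predUI; apply: leq_trans (leq_addr _ _).
by apply: sub_count => x /=; rewrite neq_ltn.
Qed.

Lemma state0 ops : state ops 0 = (0, 0).
Proof. by rewrite /state take0. Qed.

Lemma state_size ops : state ops (size ops) = (count id ops, count negb ops).
Proof. by rewrite /state take_size. Qed.

Lemma state_size_cat pre ops :
  state (pre ++ ops) (size pre) = (count id pre, count negb pre).
Proof. by rewrite /state take_size_cat. Qed.

Lemma state_sum ops t : t <= size ops -> (state ops t).1 + (state ops t).2 = t.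
Proof. by move=> le; rewrite /= count_id_negb size_take_min; lia. Qed.

Lemma state_mono ops t t' : t <= t' ->
  (state ops t).1 <= (state ops t').1 /\ (state ops t).2 <= (state ops t').2.
Proof. by move=> le; rewrite /state /= -(subnKC le) takeD !count_cat; lia. Qed.

Lemma ball_in_mono ops t t' x :
  t <= t' -> ball_in (state ops t) x -> ball_in (state ops t') x.
Proof. by move=> /(state_mono ops); case: x => i /=; lia. Qed.

Lemma mem_all_balls s x : (x \in all_balls s) = ball_in s x.
Proof.
rewrite /all_balls mem_cat; case: x => i /=.
- have -> : (inl i \in [seq inr j | j <- iota 1 s.2]) = false by apply/mapP => -[].
  by rewrite orbF mem_map ?mem_iota; [apply/idP/idP; lia | move=> ? ? []].
- have -> : (inr i \in [seq inl j | j <- iota 1 s.1]) = false by apply/mapP => -[].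
  by rewrite mem_map ?mem_iota; [apply/idP/idP; lia | move=> ? ? []].
Qed.

Lemma size_all_balls s : size (all_balls s) = s.1 + s.2.
Proof. by rewrite size_cat !size_map !size_iota. Qed.

Definition bin (f : placement) (ops : seq bool) t (x : ball) :=
  f (state ops t).1 (state ops t).2 x.

Lemma movedE f ops x t : ball_in (state ops t) x ->
  moved f ops x t = (bin f ops t x != bin f ops t.+1 x).
Proof. by move=> h; rewrite /moved h andbF. Qed.

Lemma bin_stable f ops x a b : a <= b -> ball_in (state ops a) x ->
  (forall t, a <= t < b -> ~~ moved f ops x t) -> bin f ops b x = bin f ops a x.
Proof.
move=> + hx; elim: b => [|b IH] le hn; first by have -> : a = 0 by lia.
case: (ltnP a b.+1) => h; last by have -> : a = b.+1 by lia.
rewrite -IH; [|lia | by move=> t ht; apply: hn; lia].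
have := hn b; rewrite movedE; last exact: ball_in_mono hx.
by rewrite negbK => /(_ ltac:(lia)) /eqP.
Qed.

Lemma moved_on_creation f ops x a b :
  a <= b -> ~~ ball_in (state ops a) x -> ball_in (state ops b) x ->
  exists2 t, a <= t < b & moved f ops x t.
Proof.
move=> + hn; elim: b => [|b IH] le hb.
  by move: hn; rewrite (_ : a = 0) ?hb //; lia.
case: (ltnP a b.+1) => h; last by move: hn; rewrite (_ : a = b.+1) ?hb //; lia.
case hx: (ball_in (state ops b) x).
  by have [|t ht hm] := IH _ hx; [lia | exists t => //; lia].
by exists b; [lia | rewrite /moved hb hx].
Qed.

Lemma ex_last_in (P : pred nat) lo hi : (exists2 t, lo <= t < hi & P t) ->
  exists t1, [/\ lo <= t1 < hi, P t1 & forall t, t1 < t < hi -> ~~ P t].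
Proof.
move=> [t0 ht0 hp0].
have ex : exists n, (lo <= n < hi) && P n by exists t0; rewrite ht0.
have ub : forall n, (lo <= n < hi) && P n -> n <= hi by move=> n /andP[]; lia.
case: (ex_maxnP ex ub) => t1 /andP[h1 p1] hmax; exists t1; split => // t ht.
by apply/negP => pt; have := hmax t; rewrite pt andbT; move=> /(_ ltac:(lia)); lia.
Qed.

Lemma ex_first_in (P : pred nat) lo hi : (exists2 t, lo <= t < hi & P t) ->
  exists t2, [/\ lo <= t2 < hi, P t2 & forall t, lo <= t < t2 -> ~~ P t].
Proof.
move=> [t0 ht0 hp0].
have ex : exists n, (lo <= n < hi) && P n by exists t0; rewrite ht0.
case: (ex_minnP ex) => t2 /andP[h2 p2] hmin; exists t2; split => // t ht.
by apply/negP => pt; have := hmin t; rewrite pt andbT; move=> /(_ ltac:(lia)); lia.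
Qed.

Definition binv (f : placement) (s : nat * nat) b :=
  nth (inl 0) (all_balls s) (find (fun x => f s.1 s.2 x == b) (all_balls s)).

Section Bijective.
Variable f : placement.
Hypothesis bij : bijective_family f.

Lemma placement_inj s x y : ball_in s x -> ball_in s y ->
  f s.1 s.2 x = f s.1 s.2 y -> x = y.
Proof. exact: (bij s.1 s.2).1. Qed.

Lemma placement_range s x : ball_in s x -> 0 < f s.1 s.2 x <= s.1 + s.2.
Proof. exact: (bij s.1 s.2).2.1. Qed.

Lemma binvP s b : 0 < b <= s.1 + s.2 ->
  ball_in s (binv f s b) /\ f s.1 s.2 (binv f s b) = b.
Proof.
move=> /(bij s.1 s.2).2.2 [x hx hb].
have hh : has (fun x => f s.1 s.2 x == b) (all_balls s).
  by apply/hasP; exists x; [rewrite mem_all_balls | apply/eqP].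
split; last by apply/eqP; apply: (nth_find (inl 0) hh).
by rewrite -mem_all_balls /binv mem_nth // -has_find.
Qed.

Lemma binvK s x : ball_in s x -> binv f s (f s.1 s.2 x) = x.
Proof.
move=> hx; have [hb e] := binvP (placement_range hx).
exact: placement_inj hb hx e.
Qed.

End Bijective.

Lemma ctimeP ops x t : ball_in (state ops (size ops)) x -> t <= size ops ->
  (ctime ops x < t) = ball_in (state ops t) x.
Proof.
move=> hend ht; have out0 : ball_in (state ops 0) x = false by rewrite state0 {hend}; case: x => -[].
set P := fun t => ball_in (state ops t.+1) x.
have hP : has P (iota 0 (size ops)).
  case: (posnP (size ops)) => [e | n0]; first by move: hend; rewrite e out0.
  by apply/hasP; exists (size ops).-1; [rewrite mem_iota; lia | rewrite /P prednK].
have hc : ctime ops x < size ops by rewrite /ctime -[X in _ < X](size_iota 0) -has_find.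
case: t ht => [|t] ht; first by rewrite out0.
rewrite ltnS; apply/idP/idP => h.
- have := nth_find 0 hP; rewrite nth_iota // add0n; exact: ball_in_mono.
- case: (leqP (ctime ops x) t) => // hlt.
  by have := before_find 0 hlt; rewrite nth_iota ?add0n ?h //; lia.
Qed.

Lemma segment_cut (seg : nat -> nat) lo hi a b :
  (forall t1 t2, lo <= t1 -> t1 <= t2 -> t2 < hi -> seg t1 <= seg t2) ->
  lo <= a < hi -> lo <= b < hi -> seg a < seg b ->
  exists2 T, a < T <= b &
    forall t1 t2, lo <= t1 < T -> T <= t2 < hi -> seg t1 != seg t2.
Proof.
move=> mono ha hb lt_ab.
have ab : a < b.
  by case: (ltnP a b) => // ba; have := mono b a; lia.
have ex : exists n, (a < n <= b) && (seg a < seg n) by exists b; rewrite ab leqnn lt_ab.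
case: (ex_minnP ex) => T /andP[hT ltT] Tmin; exists T => // t1 t2 h1 h2.
have le_prev : seg T.-1 <= seg a.
  case: (eqVneq T.-1 a) => [-> // | ne].
  by rewrite leqNgt; apply/negP => lt; have := Tmin T.-1; rewrite lt andbT; lia.
have := mono t1 T.-1; have := mono T t2; lia.
Qed.

Lemma mem_new_balls pst qst pend qend x : x \in new_balls pst qst pend qend ->
  ball_in (pend, qend) x && ~~ ball_in (pst, qst) x.
Proof. by rewrite mem_cat => /orP[] /mapP[i]; rewrite mem_iota => hi -> /=; lia. Qed.

Lemma uniq_new_balls pst qst pend qend : uniq (new_balls pst qst pend qend).
Proof.
rewrite cat_uniq !map_inj_uniq ?iota_uniq //=; try by move=> ? ? [].
by rewrite andbT; apply/hasP => -[_ /mapP[? _ ->] /mapP[]].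
Qed.

Lemma countedI f seg lo ops x t1 T t2 :
  lo <= t1 < T -> T <= t2 -> moved f ops x t1 -> moved f ops x t2 ->
  (forall t, t1 < t < T -> ~~ moved f ops x t) ->
  (forall t, T <= t < t2 -> ~~ moved f ops x t) ->
  seg t1 != seg t2 -> counted f seg lo ops x t2.
Proof.
move=> h1 h2 m1 m2 n1 n2 hs; rewrite /counted m2.
apply/hasP; exists t1; first by rewrite mem_iota; lia.
rewrite m1 hs; apply/allP => t; rewrite mem_iota => ht.
by case: (ltnP t T) => h; [apply: n1 | apply: n2]; lia.
Qed.

Definition counted_pairs f seg lo hi ops :=
  [seq (x, t) | t <- iota lo (hi - lo),
                x <- [seq y <- all_balls (state ops hi) | counted f seg lo ops y t]].

Lemma size_counted_pairs f seg lo hi ops :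
  size (counted_pairs f seg lo hi ops) = cost_u f seg lo hi ops.
Proof.
rewrite size_allpairs_dep sumnE big_map /cost_u /index_iota.
by apply: eq_bigr => t _; rewrite size_filter.
Qed.

Lemma mem_counted_pairs f seg lo hi ops x t :
  lo <= t < hi -> ball_in (state ops hi) x -> counted f seg lo ops x t ->
  (x, t) \in counted_pairs f seg lo hi ops.
Proof.
move=> ht hx hc; apply/allpairsPdep; exists t, x; split => //.
  by rewrite mem_iota; lia.
by rewrite mem_filter hc mem_all_balls.
Qed.

(* The ball charged to a counted pair [(z, t)]: walk the chain backwards from [z]
   (for a pair of the first sequence) or from the ball whose final bin is the bin
   of [z] at time [t] under the second sequence.  It depends on the pair only, not on the charged ball or on
   the cut, which is what makes the charging injective. *)
Fixpoint unwind (f : placement) (s0 s1 : nat * nat) n x :=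
  if n is n'.+1 then
    if ball_in s0 x then unwind f s0 s1 n' (binv f s1 (f s0.1 s0.2 x)) else x
  else x.

Definition charged_ball (f : placement) (opsB : seq bool) (s0 s1 : nat * nat)
    (p : (ball * nat) + (ball * nat)) : ball :=
  match p with
  | inl (z, _) => unwind f s0 s1 (s1.1 + s1.2).+1 z
  | inr (z, t) => unwind f s0 s1 (s1.1 + s1.2).+1 (binv f s1 (bin f opsB t z))
  end.

Section Chain.
Variables (f : placement) (opsA opsB : seq bool) (seg : nat -> nat).
Variables (lo T hi pst qst pend qend : nat) (x : ball).
Hypothesis bij : bijective_family f.
Hypothesis loT : lo < T.
Hypothesis Thi : T < hi.
Hypothesis szA : size opsA = hi.
Hypothesis szB : size opsB = hi.
Hypothesis loA : state opsA lo = (pst, qst).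
Hypothesis loB : state opsB lo = (pst, qst).
Hypothesis hiA : state opsA hi = (pend, qend).
Hypothesis hiB : state opsB hi = (pend, qend).
Hypothesis cut : forall t1 t2, lo <= t1 < T -> T <= t2 < hi -> seg t1 != seg t2.
Hypothesis xA : ball_in (state opsA T) x.
Hypothesis xB : ~~ ball_in (state opsB T) x.
Hypothesis xnew : ~~ ball_in (pst, qst) x.

Let s0 := (pst, qst).
Let s1 := (pend, qend).
Let N := pend + qend.
Let g := f pend qend.
Let charges := map inl (counted_pairs f seg lo hi opsA)
            ++ map inr (counted_pairs f seg lo hi opsB).
Let found := exists2 p, p \in charges & x = charged_ball f opsB s0 s1 p.

Let moved_before ops u := has (moved f ops u) (iota lo (T - lo)).
Let moved_after ops u := has (moved f ops u) (iota T (hi - T)).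

Section Run.
Variable ops : seq bool.
Hypothesis ops_lo : state ops lo = (pst, qst).
Hypothesis ops_hi : state ops hi = (pend, qend).

Lemma in_final u : ball_in (state ops T) u -> ball_in s1 u.
Proof. by rewrite /s1 -ops_hi; apply: ball_in_mono; lia. Qed.

Lemma bin_final u : ball_in (state ops T) u -> ~~ moved_after ops u ->
  bin f ops T u = g u.
Proof.
move=> hu /hasPn hm; have -> : g u = bin f ops hi u by rewrite /bin ops_hi.
apply/esym/bin_stable => // [|t ht]; first lia.
by apply: hm; rewrite mem_iota; lia.
Qed.

Lemma bin_initial u : ball_in (state ops T) u -> ~~ moved_before ops u ->
  ball_in s0 u /\ bin f ops T u = f pst qst u.
Proof.
move=> hu /hasPn hm.
have nm t : lo <= t < T -> ~~ moved f ops u t by move=> ht; apply: hm; rewrite mem_iota; lia.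
have hlo : ball_in (state ops lo) u.
  apply/negPn/negP => hn; have [t ht] := moved_on_creation f (ltnW loT) hn hu.
  by apply/negP; apply: nm.
split; first by rewrite /s0 -ops_lo.
by rewrite (@bin_stable f ops u lo T) ?(ltnW loT) // /bin ops_lo.
Qed.

Lemma counted_pair_around u : ball_in (state ops T) u ->
  moved_before ops u -> moved_after ops u ->
  exists2 t2, (u, t2) \in counted_pairs f seg lo hi ops & bin f ops t2 u = bin f ops T u.
Proof.
move=> hu /hasP[t ht hmt] /hasP[t' ht' hmt'].
move: ht ht'; rewrite !mem_iota => ht ht'.
have [t1 [h1 m1 n1]] : exists t1, [/\ lo <= t1 < T, moved f ops u t1 &
    forall t, t1 < t < T -> ~~ moved f ops u t].
  by apply: ex_last_in; exists t => //; lia.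
have [t2 [h2 m2 n2]] : exists t2, [/\ T <= t2 < hi, moved f ops u t2 &
    forall t, T <= t < t2 -> ~~ moved f ops u t].
  by apply: ex_first_in; exists t' => //; lia.
exists t2; last by apply: bin_stable => //; case/andP: h2.
apply: mem_counted_pairs; [lia | by rewrite ops_hi; apply: in_final |].
apply: (@countedI _ _ _ _ _ t1 T) => //; first by case/andP: h2.
by apply: cut => //; case/andP: h2 => -> ->.
Qed.

End Run.

Let next u := binv f (state opsB T) (g u).
Let c j := iter j next x.

Let chain_inv j :=
  [/\ ball_in (state opsA T) (c j), moved_before opsA (c j), ~~ moved_after opsA (c j) &
      0 < j -> [/\ ball_in s0 (c j), f pst qst (c j) = g (c j.-1)
                 & ~~ moved_before opsB (c j)]].

Lemma chain_final j : chain_inv j -> ball_in s1 (c j).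
Proof. by case=> h _ _ _; exact: (in_final hiA h). Qed.

Lemma next_spec u : ball_in (state opsA T) u -> ~~ moved_after opsA u ->
  ball_in (state opsB T) (next u) /\ bin f opsB T (next u) = g u.
Proof.
move=> hu hm; apply: binvP => //.
have := placement_range bij hu; rewrite -/(bin f opsA T u) (bin_final hiA hu hm).
by rewrite !state_sum ?szA ?szB ?(ltnW Thi).
Qed.

Lemma unwind_chain j n : j <= n -> (forall i, i <= j -> chain_inv i) ->
  unwind f s0 s1 n (c j) = x.
Proof.
elim: j n => [|j IH] [|n] //= hjn hI; first by rewrite (negbTE xnew).
have [_ _ _ /(_ erefl) [ho hp _]] := hI j.+1 (leqnn _).
rewrite -/(c j.+1) ho /= -/(c j) hp binvK //; last by apply: chain_final; apply: hI.
by apply: IH => // i hij; apply: hI; lia.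
Qed.

Lemma found_charged p : p \in charges -> x = charged_ball f opsB s0 s1 p -> found.
Proof. by exists p. Qed.

Lemma chain_start : found \/ chain_inv 0.
Proof.
have x_before : moved_before opsA x.
  have [|t ht hm] := moved_on_creation f (ltnW loT) _ xA; first by rewrite loA.
  by apply/hasP; exists t => //; rewrite mem_iota; lia.
case x_after : (moved_after opsA x); last by right; split; rewrite ?x_after.
have [t2 hp _] := counted_pair_around hiA xA x_before x_after.
left; apply: (@found_charged (inl (x, t2))); first by rewrite mem_cat map_f.
by rewrite /= (negbTE xnew).
Qed.

Lemma chain_step_moved j : j <= N -> (forall i, i <= j -> chain_inv i) ->
  moved_before opsB (c j.+1) -> found.
Proof.
move=> hjN hI z_before; have [uA _ u_after uold] := hI j (leqnn _).
have [zB zbin] : ball_in (state opsB T) (c j.+1) /\ bin f opsB T (c j.+1) = g (c j).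
  exact: next_spec.
have uend : ball_in s1 (c j) by apply: chain_final; apply: hI.
have z_after : moved_after opsB (c j.+1).
  apply/negPn/negP => hn.
  have ezu : c j.+1 = c j.
    apply: (placement_inj bij (in_final hiB zB) uend).
    by rewrite /= -/g -(bin_final hiB zB hn) zbin.
  case: (posnP j) => [j0 | jpos]; last by have [_ _] := uold jpos; rewrite -ezu z_before.
  by move: ezu zB; rewrite j0 => ->; apply/negP.
have [t2 hp hb] := counted_pair_around hiB zB z_before z_after.
apply: (@found_charged (inr (c j.+1, t2))); first by rewrite mem_cat orbC map_f.
by rewrite /charged_ball hb zbin binvK // (@unwind_chain j N.+1) // ltnW.
Qed.

Lemma chain_step_fresh j : j <= N -> (forall i, i <= j -> chain_inv i) ->
  ~~ moved_before opsB (c j.+1) -> found \/ chain_inv j.+1.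
Proof.
move=> hjN hI z_fresh; have [uA u_before u_after _] := hI j (leqnn _).
have [zB zbin] : ball_in (state opsB T) (c j.+1) /\ bin f opsB T (c j.+1) = g (c j).
  exact: next_spec.
have [zold zinit] := bin_initial loB zB z_fresh.
have zlink : f pst qst (c j.+1) = g (c j) by rewrite -zinit.
have zA : ball_in (state opsA T) (c j.+1).
  by apply: (@ball_in_mono _ lo); [lia | rewrite loA].
have z_before : moved_before opsA (c j.+1).
  apply/negPn/negP => hn; have [_ zAinit] := bin_initial loA zA hn.
  have ezu : c j.+1 = c j.
    apply: (placement_inj bij zA uA).
    rewrite -[LHS]/(bin f opsA T (c j.+1)) -[RHS]/(bin f opsA T (c j)).
    by rewrite zAinit zlink (bin_final hiA uA u_after).
  by move: hn; rewrite ezu u_before.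
case z_after : (moved_after opsA (c j.+1)); last by right; split; rewrite ?z_after.
have [t2 hp _] := counted_pair_around hiA zA z_before z_after.
left; apply: (@found_charged (inl (c j.+1, t2))); first by rewrite mem_cat map_f.
rewrite /charged_ball /= zold zlink binvK //; last by apply: chain_final; apply: hI.
by rewrite (@unwind_chain j N).
Qed.

Lemma chain_inj : (forall i, i <= N.+1 -> chain_inv i) ->
  forall i j, i < j -> j <= N.+1 -> c i != c j.
Proof.
move=> hI; elim=> [|i IH] j hij hj.
  have [_ _ _ /(_ hij) [jold _ _]] := hI j hj.
  by apply/eqP => ex; move: xnew; rewrite [x]ex jold.
have [_ _ _ /(_ erefl) [_ link_i _]] := hI i.+1 ltac:(lia).
have [_ _ _ /(_ ltac:(lia)) [_ link_j _]] := hI j hj.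
apply/eqP => e; have /eqP := IH j.-1 ltac:(lia) ltac:(lia); apply.
apply: (placement_inj bij (s := s1)); try (apply: chain_final; apply: hI; lia).
by rewrite /= -/g -link_i -link_j e.
Qed.

Lemma chain_found : found.
Proof.
have H k : k <= N.+1 -> found \/ (forall i, i <= k -> chain_inv i).
  elim: k => [|k IH] hk.
    by case: chain_start => [|h]; [left | right => i /[!leqn0] /eqP ->].
  case: (IH ltac:(lia)) => [|hI]; first by left.
  have step : found \/ chain_inv k.+1.
    case z_before : (moved_before opsB (c k.+1)).
      by left; apply: (chain_step_moved _ hI); lia.
    by apply: (chain_step_fresh _ hI); [lia | rewrite z_before].
  case: step => [|hk1]; first by left.
  by right => i; rewrite leq_eqVlt ltnS => /orP[/eqP -> | /hI].
have [//|hI] := H N.+1 (leqnn _); exfalso.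
have hu : uniq [seq c i | i <- iota 0 N.+2].
  rewrite map_inj_in_uniq ?iota_uniq // => i j; rewrite !mem_iota => hi0 hj0 e.
  by case: (ltngtP i j) => // hij; move: (chain_inj hI hij); rewrite e eqxx => /(_ ltac:(lia)).
have hs : {subset [seq c i | i <- iota 0 N.+2] <= all_balls s1}.
  move=> y /mapP[i]; rewrite mem_iota => hi0 ->; rewrite mem_all_balls.
  by apply: chain_final; apply: hI; lia.
by have := uniq_leq_size hu hs; rewrite size_map size_iota size_all_balls /= -/N; lia.
Qed.

End Chain.

Lemma ctime_window ops lo x : lo <= size ops ->
  ~~ ball_in (state ops lo) x -> ball_in (state ops (size ops)) x ->
  lo <= ctime ops x < size ops.
Proof.
by move=> le xlo xend; rewrite ctimeP // xend andbT leqNgt ctimeP.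
Qed.

Lemma earlier_segment_count_le_cost (f : placement) (pre IA IB : seq bool)
    (seg : nat -> nat) (pst qst pend qend : nat) :
  bijective_family f ->
  count id pre = pst -> count negb pre = qst ->
  pst + count id IA = pend -> qst + count negb IA = qend ->
  pst + count id IB = pend -> qst + count negb IB = qend ->
  (forall t1 t2, size pre <= t1 -> t1 <= t2 -> t2 < size pre + size IA ->
     seg t1 <= seg t2) ->
  count (fun x => seg (ctime (pre ++ IA) x) < seg (ctime (pre ++ IB) x))
        (new_balls pst qst pend qend) <=
  cost_u f seg (size pre) (size pre + size IA) (pre ++ IA)
  + cost_u f seg (size pre) (size pre + size IB) (pre ++ IB).
Proof.
move=> bij hp hq hpA hqA hpB hqB mono.
have szBA : size IB = size IA by rewrite -!count_id_negb; lia.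
rewrite szBA; set lo := size pre; set hi := lo + size IA.
set opsA := pre ++ IA; set opsB := pre ++ IB.
have szA : size opsA = hi by rewrite size_cat.
have szB : size opsB = hi by rewrite size_cat szBA.
have loA : state opsA lo = (pst, qst) by rewrite state_size_cat hp hq.
have loB : state opsB lo = (pst, qst) by rewrite state_size_cat hp hq.
have hiA : state opsA hi = (pend, qend) by rewrite -szA state_size !count_cat hp hq hpA hqA.
have hiB : state opsB hi = (pend, qend) by rewrite -szB state_size !count_cat hp hq hpB hqB.
set charges := map inl (counted_pairs f seg lo hi opsA)
             ++ map inr (counted_pairs f seg lo hi opsB).
rewrite -size_filter -!size_counted_pairs.
have -> : size (counted_pairs f seg lo hi opsA) + size (counted_pairs f seg lo hi opsB)
        = size (map (charged_ball f opsB (pst, qst) (pend, qend)) charges).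
  by rewrite size_map size_cat !size_map.
apply: uniq_leq_size; first by rewrite filter_uniq // uniq_new_balls.
move=> x; rewrite mem_filter => /andP[lt_seg /mem_new_balls /andP[xend xnew]].
have cA : lo <= ctime opsA x < hi.
  by rewrite -szA ctime_window ?szA ?loA ?hiA //; lia.
have cB : lo <= ctime opsB x < hi.
  by rewrite -szB ctime_window ?szB ?loB ?hiB //; lia.
have [T /andP[cAT Tc] cut] := segment_cut mono cA cB lt_seg.
have xA : ball_in (state opsA T) x by rewrite -ctimeP ?szA ?hiA //; lia.
have xB : ~~ ball_in (state opsB T) x by rewrite -ctimeP ?szB ?hiB //; lia.
have loT : lo < T by lia.
have Thi : T < hi by lia.
have [p hp' ->] := chain_found bij loT Thi szA szB loA loB hiA hiB cut xA xB xnew.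
by rewrite map_f.
Qed.

Theorem mainTheorem11 (f : placement) (pre I1 I2 : seq bool) (seg : nat -> nat)
    (pst qst pend qend : nat) :
  bijective_family f ->
  count id pre = pst -> count negb pre = qst ->
  pst + count id I1 = pend -> qst + count negb I1 = qend ->
  pst + count id I2 = pend -> qst + count negb I2 = qend ->
  pend - pst = qend - qst ->
  (forall t1 t2, size pre <= t1 -> t1 <= t2 -> t2 < size pre + size I1 ->
     seg t1 <= seg t2) ->
  dist seg (pre ++ I1) (pre ++ I2) pst qst pend qend <=
  2 * (cost_u f seg (size pre) (size pre + size I1) (pre ++ I1)
       + cost_u f seg (size pre) (size pre + size I2) (pre ++ I2)).
Proof.
move=> bij hp hq hp1 hq1 hp2 hq2 _ mono1.
have mono2 : forall t1 t2, size pre <= t1 -> t1 <= t2 -> t2 < size pre + size I2 ->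
    seg t1 <= seg t2.
  by rewrite (_ : size I2 = size I1) // -!count_id_negb; lia.
have le12 := earlier_segment_count_le_cost bij hp hq hp1 hq1 hp2 hq2 mono1.
have le21 := earlier_segment_count_le_cost bij hp hq hp2 hq2 hp1 hq1 mono2.
have := count_neq_le_lt (fun x => seg (ctime (pre ++ I1) x)) (fun x => seg (ctime (pre ++ I2) x))
  (new_balls pst qst pend qend).
rewrite /dist; lia.
Qed.
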